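(* Let $g:\mathbb{R}^m\to\mathbb{R}$ be $\gamma_z$-strongly convex for some $\gamma_z\geq0$, and let $\mathcal{D}(\cdot)$ be a location-scale family on a convex set $\Theta\subseteq\mathbb{R}^d$, $z_\theta\sim\mathcal{D}(\theta)\iff z_\theta\overset{d}{=}(\Sigma_0+\Sigma(\theta))z_0+\mu_0+\mu\theta$. Then for all $\theta,\theta'\in\Theta$ and $\alpha\in(0,1)$, $$\mathbb{E}_{z\sim\mathcal{D}(\alpha\theta+(1-\alpha)\theta')}[g(z)]\leq\mathbb{E}_{z\sim\alpha\mathcal{D}(\theta)+(1-\alpha)\mathcal{D}(\theta')}[g(z)]-\frac{\alpha(1-\alpha)\gamma_z}{2}\mathbb{E}_{z_0\sim\mathcal{D}_0}\|\Sigma(\theta-\theta')z_0+\mu(\theta-\theta')\|_2^2.$$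
   Context: Location-scale family: $z_0\sim\mathcal{D}_0$ is drawn from a fixed zero-mean distribution $\mathcal{D}_0$ on $\mathbb{R}^m$, $\Sigma_0\in\mathbb{R}^{m\times m}$, $\mu_0\in\mathbb{R}^m$ fixed, $\mu:\mathbb{R}^d\to\mathbb{R}^m$ and $\Sigma:\mathbb{R}^d\to\mathbb{R}^{m\times m}$ linear maps. $g$ is $\gamma_z$-strongly convex if $g(z)-\frac{\gamma_z}{2}\|z\|_2^2$ is convex. $\alpha\mathcal{D}(\theta)+(1-\alpha)\mathcal{D}(\theta')$ denotes the mixture distribution. *)

From HB Require Import structures.
From mathcomp Require Import all_boot all_order all_algebra.
From mathcomp Require Import all_classical all_reals all_analysis.
Set Implicit Arguments. Unset Strict Implicit. Unset Printing Implicit Defensive.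
Import Order.TTheory GRing.Theory Num.Theory.
Local Open Scope ring_scope.
Local Open Scope classical_set_scope.

Definition sqnorm (R : realType) (m : nat) (v : 'cV[R]_m) : R :=
  \sum_(i < m) v i 0 ^+ 2.

Definition convex_function (R : realType) (m : nat) (f : 'cV[R]_m -> R) : Prop :=
  forall (x y : 'cV[R]_m) (t : R), 0 <= t -> t <= 1 ->
    f (t *: x + (1 - t) *: y) <= t * f x + (1 - t) * f y.

Definition strongly_convex (R : realType) (m : nat) (gam : R)
  (g : 'cV[R]_m -> R) : Prop :=
  convex_function (fun z => g z - gam / 2 * sqnorm z).

Definition convex_subset (R : realType) (d : nat) (S : set 'cV[R]_d) : Prop :=
  forall (x y : 'cV[R]_d) (t : R), S x -> S y -> 0 <= t -> t <= 1 ->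
    S (t *: x + (1 - t) *: y).

Definition linear_map (R : realType) (U V : lmodType R) (f : U -> V) : Prop :=
  forall (a : R) (x y : U), f (a *: x + y) = a *: f x + f y.

Definition ls_sample (R : realType) (m d : nat) (T : Type)
  (Sig0 : 'M[R]_m) (mu0 : 'cV[R]_m)
  (Sig : 'cV[R]_d -> 'M[R]_m) (mu : 'cV[R]_d -> 'cV[R]_m)
  (z0 : T -> 'cV[R]_m) (theta : 'cV[R]_d) (w : T) : 'cV[R]_m :=
  (Sig0 + Sig theta) *m z0 w + mu0 + mu theta.

(* E_{z ~ D(theta)} [g z], computed through z0 ~ D0 (law of z0 under P) *)
Definition ls_expect (R : realType) (m d : nat) (dT : measure_display)
  (T : measurableType dT) (P : probability T R)
  (Sig0 : 'M[R]_m) (mu0 : 'cV[R]_m)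
  (Sig : 'cV[R]_d -> 'M[R]_m) (mu : 'cV[R]_d -> 'cV[R]_m)
  (z0 : T -> 'cV[R]_m) (g : 'cV[R]_m -> R) (theta : 'cV[R]_d) : \bar R :=
  (\int[P]_w (g (ls_sample Sig0 mu0 Sig mu z0 theta w))%:E)%E.

Definition ls_mixture_expect (R : realType) (m d : nat) (dT : measure_display)
  (T : measurableType dT) (P : probability T R)
  (Sig0 : 'M[R]_m) (mu0 : 'cV[R]_m)
  (Sig : 'cV[R]_d -> 'M[R]_m) (mu : 'cV[R]_d -> 'cV[R]_m)
  (z0 : T -> 'cV[R]_m) (g : 'cV[R]_m -> R) (alpha : R)
  (theta theta' : 'cV[R]_d) : \bar R :=
  (alpha%:E * ls_expect P Sig0 mu0 Sig mu z0 g theta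
   + (1 - alpha)%:E * ls_expect P Sig0 mu0 Sig mu z0 g theta')%E.

(** For every outcome [w], the sample [z_theta(w)] is affine in [theta], so
    the sample at [alpha theta + (1 - alpha) theta'] is the convex combination
    of the samples at [theta] and [theta'].  Strong convexity of [g] applied
    pointwise then bounds [g] at the mixed sample by the convex combination of
    the values, minus [alpha (1 - alpha) gam / 2 * ||z_theta - z_theta'||^2],
    and [z_theta - z_theta' = Sigma(theta - theta') z0 + mu(theta - theta')].
    Integrating this pointwise inequality gives the claim. *)

From HB Require Import structures.
From mathcomp Require Import all_boot all_order all_algebra.
From mathcomp Require Import all_classical all_reals all_analysis.
From mathcomp Require Import ring lra measurable_realfun.
Import Order.TTheory GRing.Theory Num.Theory.
Local Open Scope ring_scope.
Local Open Scope classical_set_scope.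

Section LinearMap.
Context {R : realType} {U V : lmodType R} {f : U -> V}.
Hypothesis hf : linear_map f.

Lemma linear_map0 : f 0 = 0.
Proof.
have := hf 1 0 0; rewrite !scale1r addr0 => f0.
by apply: (addrI (f 0)); rewrite addr0 -f0.
Qed.

Lemma linear_mapZ a x : f (a *: x) = a *: f x.
Proof. by have := hf a x 0; rewrite !addr0 linear_map0 addr0. Qed.

Lemma linear_mapB x y : f (x - y) = f x - f y.
Proof. by have := hf (-1) y x; rewrite !scaleN1r addrC => ->; rewrite addrC. Qed.

Lemma linear_map_convex a x y :
  f (a *: x + (1 - a) *: y) = a *: f x + (1 - a) *: f y.
Proof. by rewrite hf linear_mapZ. Qed.

End LinearMap.

Section SquaredNorm.
Context {R : realType} {m : nat}.

Lemma sqnorm_ge0 (v : 'cV[R]_m) : 0 <= sqnorm v.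
Proof. by apply: sumr_ge0 => i _; exact: sqr_ge0. Qed.

Lemma sqnorm_convex_gap (u v : 'cV[R]_m) a :
  a * sqnorm u + (1 - a) * sqnorm v - sqnorm (a *: u + (1 - a) *: v)
  = a * (1 - a) * sqnorm (u - v).
Proof.
rewrite /sqnorm !mulr_sumr -!big_split -sumrB /=; apply: eq_bigr => i _.
by rewrite !mxE; ring.
Qed.

Lemma strongly_convex_le {gam : R} {g : 'cV[R]_m -> R} x y a :
  strongly_convex gam g -> 0 <= a -> a <= 1 ->
  g (a *: x + (1 - a) *: y) + a * (1 - a) * gam / 2 * sqnorm (x - y)
  <= a * g x + (1 - a) * g y.
Proof.
move=> hg a0 a1; have := hg x y a a0 a1.
have -> : a * (1 - a) * gam / 2 * sqnorm (x - y)
  = gam / 2 * (a * (1 - a) * sqnorm (x - y)) by ring.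
by rewrite -sqnorm_convex_gap; lra.
Qed.

Lemma measurable_sqnorm_affine (n : nat) (dT : measure_display)
    (T : measurableType dT) (A : 'M[R]_(m, n)) (b : 'cV[R]_m)
    (z : T -> 'cV[R]_n) :
  (forall j, measurable_fun setT (fun w => z w j 0)) ->
  measurable_fun setT (fun w => sqnorm (A *m z w + b)).
Proof.
move=> mz; apply: measurable_sum => i; apply: measurable_funX.
under eq_fun do rewrite mxE [X in X + _]mxE.
apply: measurable_funD; last exact: measurable_cst.
by apply: measurable_sum => j; apply: measurable_funM => //; exact: measurable_cst.
Qed.

End SquaredNorm.

Lemma le_integral_subr (R : realType) (dT : measure_display)
    (T : measurableType dT) (mu : measure T R) (f F : T -> R)
    (h : T -> \bar R) :
  mu.-integrable setT (EFin \o f) -> mu.-integrable setT (EFin \o F) ->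
  measurable_fun setT h -> (forall w, (0 <= h w)%E) ->
  (forall w, (f w)%:E + h w <= (F w)%:E)%E ->
  (\int[mu]_w (f w)%:E <= \int[mu]_w (F w)%:E - \int[mu]_w h w)%E.
Proof.
move=> intf intF mh h0 fhF.
have If := integrable_fin_num measurableT intf.
have IF := integrable_fin_num measurableT intF.
have le_hFf : (\int[mu]_w h w <= \int[mu]_w (F w)%:E - \int[mu]_w (f w)%:E)%E.
  rewrite -integralB_EFin //; apply: ge0_le_integral => //.
  - by apply: emeasurable_funB; [exact: measurable_int intF | exact: measurable_int intf].
  - by move=> w _; rewrite leeBrDl //; exact: fhF.
by rewrite lee_suber_addr // addeC -leeBrDr.
Qed.

Section LocationScale.
Context {R : realType} {m d : nat} {T : Type}.
Context {Sig0 : 'M[R]_m} {mu0 : 'cV[R]_m}.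
Context {Sig : 'cV[R]_d -> 'M[R]_m} {mu : 'cV[R]_d -> 'cV[R]_m}.
Context {z0 : T -> 'cV[R]_m}.
Hypotheses (hSig : linear_map Sig) (hmu : linear_map mu).

Let zs := ls_sample Sig0 mu0 Sig mu z0.

Lemma ls_sample_convex a th th' w :
  zs (a *: th + (1 - a) *: th') w = a *: zs th w + (1 - a) *: zs th' w.
Proof.
rewrite /zs /ls_sample (linear_map_convex hSig) (linear_map_convex hmu).
rewrite !mulmxDl -!scalemxAl.
move: (Sig0 *m z0 w) (Sig th *m z0 w) (Sig th' *m z0 w) => X Y Z.
by apply/matrixP => i j; rewrite !mxE; ring.
Qed.

Lemma ls_sampleB th th' w :
  zs th w - zs th' w = Sig (th - th') *m z0 w + mu (th - th').
Proof.
rewrite /zs /ls_sample (linear_mapB hSig) (linear_mapB hmu) !mulmxDl mulNmx.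
move: (Sig0 *m z0 w) (Sig th *m z0 w) (Sig th' *m z0 w) => X Y Z.
by apply/matrixP => i j; rewrite !mxE; ring.
Qed.

End LocationScale.

Theorem propositionA2 (R : realType) (m d : nat)
  (dT : measure_display) (T : measurableType dT) (P : probability T R)
  (z0 : T -> 'cV[R]_m)
  (Sig0 : 'M[R]_m) (mu0 : 'cV[R]_m)
  (Sig : 'cV[R]_d -> 'M[R]_m) (mu : 'cV[R]_d -> 'cV[R]_m)
  (Theta : set 'cV[R]_d) (g : 'cV[R]_m -> R) (gam : R)
  (* D0: z0 has zero mean and finite second moment *)
  (hz0int : forall i : 'I_m, P.-integrable setT (fun w => (z0 w i 0)%:E))
  (hz0mean : forall i : 'I_m, (\int[P]_w (z0 w i 0)%:E = 0)%E)
  (hz0sq : P.-integrable setT (fun w => (sqnorm (z0 w))%:E))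
  (* linear maps mu and Sigma *)
  (hSig : linear_map Sig) (hmu : linear_map mu)
  (* convex parameter set *)
  (hTheta : convex_subset Theta)
  (* g is gam-strongly convex, gam >= 0 *)
  (hgam : 0 <= gam) (hg : strongly_convex gam g)
  (* expectations of g under D(theta) are finite on Theta *)
  (hgint : forall theta, Theta theta ->
     P.-integrable setT
       (fun w => (g (ls_sample Sig0 mu0 Sig mu z0 theta w))%:E)) :
  forall (theta theta' : 'cV[R]_d) (alpha : R),
    Theta theta -> Theta theta' -> 0 < alpha -> alpha < 1 ->
    (ls_expect P Sig0 mu0 Sig mu z0 g (alpha *: theta + (1 - alpha) *: theta')
     <= ls_mixture_expect P Sig0 mu0 Sig mu z0 g alpha theta theta'
        - (alpha * (1 - alpha) * gam / 2)%:E
          * \int[P]_w (sqnorm (Sig (theta - theta') *m z0 w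
                               + mu (theta - theta')))%:E)%E.
Proof.
move=> th th' a Th Th' a0 a1.
set zs := ls_sample Sig0 mu0 Sig mu z0.
set c := a * (1 - a) * gam / 2.
set N := fun w => sqnorm (Sig (th - th') *m z0 w + mu (th - th')).
have c0 : 0 <= c by rewrite /c !mulr_ge0 ?invr_ge0 //; lra.
have mN : measurable_fun setT N.
  apply: measurable_sqnorm_affine => j.
  by apply/measurable_EFinP; exact: measurable_int (hz0int j).
have int1 := hgint _ Th; have int2 := hgint _ Th'.
have intZ1 := integrableZl measurableT a int1.
have intZ2 := integrableZl measurableT (1 - a) int2.
rewrite /ls_mixture_expect /ls_expect -/zs.
rewrite -(integralZl measurableT int1) -(integralZl measurableT int2).
rewrite -(integralD measurableT intZ1 intZ2).
have N0 w : setT w -> (0 <= (N w)%:E)%E by rewrite lee_fin sqnorm_ge0.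
rewrite -(ge0_integralZl_EFin P measurableT N0 (proj2 (measurable_EFinP _ _) mN) c0).
apply: le_integral_subr.
- exact: hgint (hTheta _ _ _ Th Th' (ltW a0) (ltW a1)).
- exact: eq_integrable (integrableD measurableT intZ1 intZ2).
- by apply: emeasurable_funM => //; apply/measurable_EFinP.
- by move=> w; rewrite lee_fin mulr_ge0 // sqnorm_ge0.
- move=> w; rewrite -EFinM -EFinD lee_fin /zs ls_sample_convex //.
  have := strongly_convex_le (zs th w) (zs th' w) a hg (ltW a0) (ltW a1).
  by rewrite ls_sampleB //.
Qed.
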